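(* Let $(X,d)$ be a metric space and $\mu$ a non-atomic Borel measure on $X$. For every path $\gamma:[a,b]\to X$ in $\Gamma^\mu$, the function $\nu_\gamma$ is strictly increasing, continuous, maps $[a,b]$ onto $[0,h(\gamma)]$, and for every $x\in[a,b]$, $h(\gamma)=h(\gamma|_{[a,x]})+h(\gamma|_{[x,b]})$.
   Context: A path is a continuous map $\gamma:[a,b]\to X$; a subpath is a restriction to a subinterval, trivial if that interval is a point; $\mathrm{Im}(\gamma)=\gamma([a,b])$. $\mu$ non-atomic: $\mu(\{x\})=0$ for all $x$. $\Gamma^\mu$ is the set of all non-trivial injective paths $\gamma$ with $0<\mu(\mathrm{Im}(\tilde\gamma))<\infty$ for every non-trivial subpath $\tilde\gamma$. For any path $\eta$ (including subpaths), $h(\eta)=\mu(\mathrm{Im}(\eta))$; for $\gamma:[a,b]\to X$ in $\Gamma^\mu$, $\nu_\gamma:[a,b]\to\mathbb R$, $\nu_\gamma(x)=h(\gamma|_{[a,x]})$. *)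

From HB Require Import structures.
From mathcomp Require Import all_boot all_order all_algebra.
From mathcomp Require Import all_classical all_reals all_analysis.
Set Implicit Arguments. Unset Strict Implicit. Unset Printing Implicit Defensive.
Import Order.TTheory GRing.Theory Num.Theory.
Import numFieldNormedType.Exports.
Local Open Scope classical_set_scope.
Local Open Scope ring_scope.

(* Metric spaces with a distinguished point (required by MathComp-Analysis'
   measurable structures; harmless here since X contains the image of a path). *)
#[short(type="pointedMetricType")]
HB.structure Definition PointedMetric (K : numDomainType) :=
  {T of Pointed T & Metric K T}.

Notation borel_space X := (g_sigma_algebraType (@open X)).

Section paths.
Context {R : realType} {X : pointedMetricType R}.
Variable mu : set (borel_space X) -> \bar R.

Definition path_im (gamma : R -> X) (c d : R) : set X := gamma @` `[c, d].

Definition hmu (gamma : R -> X) (c d : R) : \bar R := mu (path_im gamma c d).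

Definition non_atomic : Prop := forall x : X, mu [set x] = 0%E.

Definition in_Gamma (a b : R) (gamma : R -> X) : Prop :=
  [/\ a < b,
      {within `[a, b], continuous gamma},
      {in `[a, b] &, injective gamma} &
      forall c d, a <= c -> c < d -> d <= b ->
        (0 < hmu gamma c d < +oo)%E].

(* nu_gamma(x) = h(gamma|_[a,x]), as a real number (it is finite). *)
Definition nu (a : R) (gamma : R -> X) (x : R) : R := fine (hmu gamma a x).

End paths.

From HB Require Import structures.
From mathcomp Require Import all_boot all_order all_algebra.
From mathcomp Require Import all_classical all_reals all_analysis.
From mathcomp Require Import lra.
Import Order.TTheory GRing.Theory Num.Theory.
Import numFieldNormedType.Exports.
Local Open Scope classical_set_scope.
Local Open Scope ring_scope.

(* Cutting gamma|_[c,d] at x gives the images of gamma|_[c,x] and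
   gamma|_[x,d], which by injectivity meet only in gamma x; non-atomicity makes
   this common point negligible, so h is additive. Hence nu_gamma is strictly
   increasing (subpaths have positive measure), and |nu_gamma x - nu_gamma t| is
   bounded by the measure of the image of a small window around x; these images
   decrease to {gamma x} by continuity of gamma, so their measures tend to 0 and
   nu_gamma is continuous. Surjectivity onto [0, h(gamma)] is the intermediate
   value theorem. *)

Lemma in_set_itvcc (R : realType) (c d t : R) :
  `[c, d]%classic t = (c <= t <= d).
Proof. by rewrite /= in_itv. Qed.

Lemma closed_borel_measurable (X : ptopologicalType) (A : set X) :
  closed A -> measurable (A : set (borel_space X)).
Proof.
move=> cA; rewrite -(setCK A); apply: measurableC.
by apply: sub_sigma_algebra; rewrite openC.
Qed.

Section path_measure.
Context (R : realType) (X : pointedMetricType R)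
  (mu : {measure set (borel_space X) -> \bar R}) (a b : R) (gamma : R -> X).

Lemma path_im1 x : path_im gamma x x = [set gamma x].
Proof.
apply/seteqP; split => y /=.
  by move=> [t]; rewrite in_set_itvcc -eq_le => /eqP -> <-.
by move=> ->; exists x => //; rewrite in_set_itvcc lexx.
Qed.

Lemma path_im_subset c d c' d' : c' <= c -> d <= d' ->
  path_im gamma c d `<=` path_im gamma c' d'.
Proof.
move=> c'c dd' _ [t + <-]; rewrite in_set_itvcc => /andP[ct td].
by exists t => //; rewrite in_set_itvcc (le_trans c'c ct) (le_trans td dd').
Qed.

Lemma path_im_split c x d : c <= x -> x <= d ->
  path_im gamma c d = path_im gamma c x `|` (path_im gamma x d `\ gamma x).
Proof.
move=> cx xd; apply/seteqP; split => y.
  move=> [t]; rewrite in_set_itvcc => /andP[ct td] <-.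
  have [tx|xt] := leP t x; first by left; exists t; rewrite ?in_set_itvcc ?ct.
  have [->|ne] := eqVneq (gamma t) (gamma x).
    by left; exists x; rewrite ?in_set_itvcc ?cx ?lexx.
  by right; split; [exists t; rewrite ?in_set_itvcc ?(ltW xt) | move/eqP: ne].
case=> [|[]]; first exact: path_im_subset.
by move=> + _; apply: path_im_subset.
Qed.

Hypothesis gamma_cont : {within `[a, b], continuous gamma}.

Lemma path_im_measurable c d : a <= c -> d <= b ->
  measurable (path_im gamma c d : set (borel_space X)).
Proof.
move=> ac db; apply: closed_borel_measurable.
apply: compact_closed; first exact: metric_hausdorff.
apply: continuous_compact; last exact: segment_compact.
apply: continuous_subspaceW gamma_cont => t /=; rewrite !in_itv/= => /andP[ct td].
by rewrite (le_trans ac ct) (le_trans td db).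
Qed.

Lemma hmu_le c d c' d' : a <= c' -> c' <= c -> d <= d' -> d' <= b ->
  (hmu mu gamma c d <= hmu mu gamma c' d')%E.
Proof.
move=> ac' c'c dd' d'b; apply: le_measure; rewrite ?inE.
- exact: path_im_measurable (le_trans ac' c'c) (le_trans dd' d'b).
- exact: path_im_measurable.
- exact: path_im_subset.
Qed.

Hypothesis gamma_inj : {in `[a, b] &, injective gamma}.
Hypothesis mu_non_atomic : non_atomic mu.

Lemma hmu_split c x d : a <= c -> c <= x -> x <= d -> d <= b ->
  hmu mu gamma c d = (hmu mu gamma c x + hmu mu gamma x d)%E.
Proof.
move=> ac cx xd db.
have ax := le_trans ac cx; have xb := le_trans xd db.
have mB := path_im_measurable _ _ ax db.
have mx : measurable ([set gamma x] : set (borel_space X)).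
  by rewrite -path_im1; apply: path_im_measurable.
have disj : path_im gamma c x `&` (path_im gamma x d `\ gamma x) = set0.
  apply/seteqP; split => // _ [[t + <-]]; rewrite in_set_itvcc => /andP[ct tx].
  move=> [[s]]; rewrite in_set_itvcc => /andP[xs sd] gs; apply.
  have ts : t = s by apply: gamma_inj; rewrite // in_itv/=;
    apply/andP; split; lra.
  by congr gamma; apply/eqP; rewrite eq_le tx ts xs.
have mu_drop_point : mu (path_im gamma x d `\ gamma x) = mu (path_im gamma x d).
  have gxB : [set gamma x] `<=` path_im gamma x d.
    by move=> _ ->; exists x; rewrite ?in_set_itvcc ?lexx.
  rewrite -[in RHS](setDKU gxB) measureU0 ?mu_non_atomic //.
  exact: measurableD.
rewrite /hmu (path_im_split _ _ _ cx xd) measureU //.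
- by congr (_ + _)%E; exact: mu_drop_point.
- exact: path_im_measurable.
- exact: measurableD.
Qed.

Definition path_window x (n : nat) : set X :=
  path_im gamma (Num.max a (x - n.+1%:R^-1)) (Num.min b (x + n.+1%:R^-1)).

Lemma in_path_window_itv x n t :
  `[Num.max a (x - n.+1%:R^-1), Num.min b (x + n.+1%:R^-1)]%classic t =
  (t \in `[a, b]) && (`|x - t| <= n.+1%:R^-1).
Proof.
by rewrite in_set_itvcc ge_max le_min ler_distlC in_itv /= andbACA andbA.
Qed.

Lemma path_window_measurable x n :
  measurable (path_window x n : set (borel_space X)).
Proof. by apply: path_im_measurable; rewrite ?le_max ?ge_min lexx. Qed.

Lemma path_window_nonincreasing x : nonincreasing_seq (path_window x).
Proof.
move=> n m nm; rewrite subsetEset => _ [t + <-] => tm; exists t => //; move: tm.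
have emn : m.+1%:R^-1 <= n.+1%:R^-1 :> R.
  by rewrite lef_pV2 ?posrE ?ltr0Sn // ler_nat ltnS.
rewrite !in_path_window_itv => /andP[-> xt] /=; exact: le_trans emn.
Qed.

Lemma bigcap_path_window x : x \in `[a, b] ->
  \bigcap_n path_window x n = [set gamma x].
Proof.
move=> xab; apply/seteqP; split => z; last first.
  move=> /= -> n _; exists x => //.
  by rewrite in_path_window_itv xab subrr normr0 /= invr_ge0.
move=> z_window /=; apply: mdist_positivity; apply/eqP.
rewrite eq_le mdist_ge0 andbT; apply/ler_addgt0Pl => e e0; rewrite addr0.
have : nbhs x (fun t => `[a, b]%classic t -> ball (gamma x) e (gamma t)).
  exact: (subspace_continuousP _ _).1 gamma_cont x xab _ (nbhsx_ballx _ _ e0).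
rewrite nbhs_ballP => -[r r0 gamma_near].
have [N _ N_small] := near_infty_natSinv_lt (PosNum r0).
have [t] := z_window N I; rewrite in_path_window_itv => /andP[tab xt] <-.
have : ball (gamma x) e (gamma t).
  apply: gamma_near; last exact: tab.
  by rewrite -ball_normE /=; apply: le_lt_trans xt (N_small N (leqnn N)).
by rewrite ballEmdist /= metric_sym => /ltW.
Qed.

Hypothesis hmu_finite : (hmu mu gamma a b < +oo)%E.

Lemma path_window_small x eps : x \in `[a, b] -> 0 < eps ->
  exists n, (mu (path_window x n) < eps%:E)%E.
Proof.
move=> xab eps0.
have : (mu \o path_window x @ \oo --> 0%E)%E.
  rewrite -(mu_non_atomic (gamma x)) -bigcap_path_window //.
  apply: nonincreasing_cvg_mu.
  - apply: le_lt_trans hmu_finite.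
    by apply: hmu_le; rewrite ?le_max ?ge_min lexx.
  - exact: path_window_measurable.
  - rewrite bigcap_path_window // -path_im1.
    by move: xab; rewrite in_itv /= => /andP[ax xb]; apply: path_im_measurable.
  - exact: path_window_nonincreasing.
move/fine_cvgP => [window_fin window_cvg].
have [N _ /(_ N (leqnn N))[/= N_fin N_small]] :=
  filterI window_fin (cvgr_lt _ window_cvg _ eps0).
by exists N; rewrite -(fineK N_fin) lte_fin.
Qed.

Lemma hmu_fin_num c d : a <= c -> d <= b -> hmu mu gamma c d \is a fin_num.
Proof.
move=> ac db; rewrite ge0_fin_numE ?measure_ge0 //.
by apply: le_lt_trans hmu_finite; apply: hmu_le.
Qed.

Lemma nu_split x y : a <= x -> x <= y -> y <= b ->
  nu mu a gamma y = nu mu a gamma x + fine (hmu mu gamma x y).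
Proof.
move=> ax xy yb.
rewrite /nu (hmu_split _ _ _ (lexx a) ax xy yb).
by rewrite fineD ?hmu_fin_num // (le_trans xy).
Qed.

Lemma nu_dist_le l r x t : a <= l -> r <= b ->
  l <= x <= r -> l <= t <= r ->
  `|nu mu a gamma x - nu mu a gamma t| <= fine (hmu mu gamma l r).
Proof.
move=> al rb; wlog tx : x t / t <= x => [sym|] xlr tlr.
  by have [/sym|/ltW/sym] := leP t x; rewrite 1?distrC; apply.
case/andP: tlr => lt _; case/andP: xlr => _ xr.
have at' := le_trans al lt; have xb := le_trans xr rb.
rewrite (nu_split _ _ at' tx xb) addrAC subrr add0r.
rewrite ger0_norm ?fine_ge0 ?measure_ge0 //.
by rewrite fine_le ?hmu_fin_num // hmu_le.
Qed.

Lemma nu_continuous : {within `[a, b], continuous (nu mu a gamma)}.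
Proof.
apply/subspace_continuousP => x xab; apply/cvgrPdist_lt => e e0.
have [N window_small] := path_window_small x e xab e0.
have [ax xb] : a <= x /\ x <= b by move: xab; rewrite in_set_itvcc => /andP.
set l := Num.max a (x - N.+1%:R^-1); set r := Num.min b (x + N.+1%:R^-1).
have al : a <= l by rewrite le_max lexx.
have rb : r <= b by rewrite ge_min lexx.
have xlr : l <= x <= r.
  by rewrite ge_max le_min ax xb /= gerBl lerDl invr_ge0 ler0n.
rewrite near_withinE; near=> t => tab.
rewrite /from_subspace; apply: le_lt_trans (nu_dist_le _ _ _ _ al rb xlr _) _.
- have : `|x - t| < N.+1%:R^-1.
    by near: t; apply/nbhs_ballP; exists N.+1%:R^-1 => //=; rewrite invr_gt0.
  move: tab; rewrite in_set_itvcc ge_max le_min ltr_distlC.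
  by move=> /andP[-> ->] /andP[/ltW -> /ltW ->].
- by rewrite -lte_fin fineK ?hmu_fin_num.
Unshelve. all: by end_near.
Qed.

Lemma nu_image : a <= b ->
  nu mu a gamma @` `[a, b] = `[0, fine (hmu mu gamma a b)]%classic.
Proof.
move=> ab; have nu_ge0 t : 0 <= nu mu a gamma t by rewrite fine_ge0 ?measure_ge0.
have nua : nu mu a gamma a = 0 by rewrite /nu /hmu path_im1 mu_non_atomic.
apply/seteqP; split => [_ [t + <-]|v].
  rewrite !in_set_itvcc nu_ge0 => /andP[at' tb] /=.
  rewrite -[leRHS]/(nu mu a gamma b) (nu_split _ _ at' tb (lexx b)) lerDl.
  by rewrite fine_ge0 ?measure_ge0.
rewrite in_set_itvcc => v_range.
have := IVT ab nu_continuous; rewrite nua min_l ?max_r ?nu_ge0 //.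
by move=> /(_ v v_range) [t tab <-]; exists t.
Qed.

Hypothesis subpath_pos : forall c d, a <= c -> c < d -> d <= b ->
  (0 < hmu mu gamma c d)%E.

Lemma nu_strictly_increasing :
  {in `[a, b] &, forall x y, x < y -> nu mu a gamma x < nu mu a gamma y}.
Proof.
move=> x y; rewrite !in_itv /= => /andP[ax _] /andP[_ yb] xy.
rewrite (nu_split _ _ ax (ltW xy) yb) ltrDl; apply: fine_gt0.
rewrite subpath_pos //=; apply: le_lt_trans hmu_finite; exact: hmu_le.
Qed.
End path_measure.

Theorem lemma2p1 (R : realType) (X : pointedMetricType R)
  (mu : {measure set (borel_space X) -> \bar R})
  (a b : R) (gamma : R -> X) :
  non_atomic mu ->
  in_Gamma mu a b gamma ->
  [/\ {in `[a, b] &, forall x y, x < y -> nu mu a gamma x < nu mu a gamma y},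
      {within `[a, b], continuous (nu mu a gamma)},
      (nu mu a gamma) @` `[a, b] = `[0, fine (hmu mu gamma a b)]%classic &
      forall x, x \in `[a, b] ->
        hmu mu gamma a b = (hmu mu gamma a x + hmu mu gamma x b)%E].
Proof.
move=> non_atomic_mu [ab gamma_cont gamma_inj subpath_fin].
have hmu_finite : (hmu mu gamma a b < +oo)%E.
  by have /andP[] := subpath_fin a b (lexx a) ab (lexx b).
have subpath_pos c d : a <= c -> c < d -> d <= b -> (0 < hmu mu gamma c d)%E.
  by move=> ac cd db; have /andP[] := subpath_fin c d ac cd db.
split.
- exact: nu_strictly_increasing.
- exact: nu_continuous.
- exact: nu_image (ltW ab).
- move=> x; rewrite in_itv /= => /andP[ax xb].
  exact: hmu_split (lexx a) ax xb (lexx b).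
Qed.
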